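(* Let $m$ be a divisor of $n$, $s=n/m$, $\alpha$ a primitive element of $\mathbb{F}_{q^n}$, $l$ an integer with $1\le l<\frac{q^n-1}{q^m-1}$, and $L$ the degree of the minimal polynomial of $\alpha^l$ over $\mathbb{F}_{q^m}$. Let $r\ge2$ and integers $1\le s_1<\dots<s_r\le L$ with $s_r<s$, and let $\mathcal{F}=(\mathcal{F}_1,\dots,\mathcal{F}_r)$ be the flag with $\mathcal{F}_i=\bigoplus_{j=0}^{s_i-1}\mathbb{F}_{q^m}\alpha^{lj}$ (of type $(ms_1,\dots,ms_r)$). Then $\mathrm{Orb}(\mathcal{F})$ has best friend $\mathbb{F}_{q^m}$ and $|\mathrm{Orb}(\mathcal{F})|=\frac{q^n-1}{q^m-1}$. Moreover: (1) If $s_r<L$, then $\mathrm{Orb}(\mathcal{F})$ is consistent and $d_f(\mathrm{Orb}(\mathcal{F}))=2mr$. (2) If $s_r=L$, then $d_f(\mathrm{Orb}(\mathcal{F}))=2m(r-1)$ and, with $c=\frac{q^n-1}{q^{mL}-1}$, $\mathrm{Orb}(\mathcal{F})$ is the disjoint union $\dot\bigcup_{i=0}^{c-1}\mathrm{Orb}_{\alpha^c}(\mathcal{F}\alpha^i)$.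
   Context: $q$ prime power; $\mathbb{F}_{q^n}$ is an $n$-dimensional $\mathbb{F}_q$-vector space; subspaces are $\mathbb{F}_q$-subspaces; $d_S(\mathcal{U},\mathcal{V})=\dim(\mathcal{U}+\mathcal{V})-\dim(\mathcal{U}\cap\mathcal{V})$. A flag is a chain $\{0\}\subsetneq\mathcal{F}_1\subsetneq\cdots\subsetneq\mathcal{F}_r\subsetneq\mathbb{F}_{q^n}$; $d_f(\mathcal{F},\mathcal{F}')=\sum_i d_S(\mathcal{F}_i,\mathcal{F}'_i)$; the minimum distance of a flag code is the minimum $d_f$ between distinct codewords. For $\beta\in\mathbb{F}_{q^n}^\ast$, $\mathcal{F}\beta=(\mathcal{F}_1\beta,\dots,\mathcal{F}_r\beta)$, $\mathrm{Orb}_\beta(\mathcal{F})=\{\mathcal{F}\beta^j:j\ge0\}$, and $\mathrm{Orb}(\mathcal{F})=\mathrm{Orb}_\alpha(\mathcal{F})$ for $\alpha$ primitive. The $i$-th projected code of a flag code $\mathcal{C}$ is $\mathcal{C}_i=\{\mathcal{F}_i:\mathcal{F}\in\mathcal{C}\}$. $\mathcal{C}$ is disjoint if $|\mathcal{C}_i|=|\mathcal{C}|$ for all $i$, and consistent if it is disjoint and $d_f(\mathcal{C})=\sum_i d_S(\mathcal{C}_i)$ (minimum subspace distances of the projected codes). A subfield $\mathbb{F}_{q^m}$ is a friend of a subspace if the subspace is an $\mathbb{F}_{q^m}$-vector space; a friend of a flag is a common friend of all its subspaces; the best friend is the largest friend (of a code $\mathrm{Orb}_\beta(\mathcal{F})$: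 that of $\mathcal{F}$). *)

(* F_q = F : finFieldType, F_{q^n} = L : fieldExtType F. *)
From HB Require Import structures.
From mathcomp Require Import all_boot all_order all_algebra all_field.
Set Implicit Arguments. Unset Strict Implicit. Unset Printing Implicit Defensive.
Import GRing.Theory.
Local Open Scope ring_scope.

Section FlagDefs.
Variables (F : finFieldType) (L : fieldExtType F).

Definition subspace_dist (U V : {vspace L}) : nat :=
  (\dim (U + V) - \dim (U :&: V))%N.

Definition flag := seq {vspace L}.

Definition is_flag (Fl : flag) : Prop :=
  sorted (fun U V : {vspace L} => ((U <= V)%VS && (U != V))) (0%VS :: rcons Fl fullv).

Definition flag_dist (Fl Fl' : flag) : nat :=
  (\sum_(i < size Fl) subspace_dist (nth 0%VS Fl i) (nth 0%VS Fl' i))%N.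

(* minimum distance of a code (list of codewords) w.r.t. a distance d:
   the minimum of d x y over pairs of distinct codewords (0 if there is
   no such pair) *)
Definition min_dist (T : eqType) (d : T -> T -> nat) (C : seq T) : nat :=
  let ds := [seq d p.1 p.2 | p <- [seq (x, y) | x <- C, y <- C] & p.1 != p.2] in
  if ds is a :: t then foldr minn a t else 0%N.

Definition flag_mul (Fl : flag) (b : L) : flag :=
  [seq (U * <[b]>)%VS | U <- Fl].

(* Orb_beta(F) = { F beta^j : j >= 0 }, as a duplicate-free list.
   For beta <> 0 in F_{q^n}, beta^(q^n - 1) = 1, so j < q^n - 1 suffices. *)
Definition Orb (b : L) (Fl : flag) : seq flag :=
  undup [seq flag_mul Fl (b ^+ j) | j <- iota 0 (#|F| ^ \dim {: L}).-1].

(* i-th projected code (indices start at 0) *)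
Definition proj_code (C : seq flag) (i : nat) : seq {vspace L} :=
  undup [seq nth 0%VS Fl i | Fl <- C].

Definition flag_code_disjoint (C : seq flag) (r : nat) : Prop :=
  forall i, (i < r)%N -> size (proj_code C i) = size (undup C).

Definition flag_code_consistent (C : seq flag) (r : nat) : Prop :=
  flag_code_disjoint C r /\
  min_dist flag_dist C =
    (\sum_(i < r) min_dist subspace_dist (proj_code C i))%N.

(* K is a friend of the subspace U: U is a K-vector space *)
Definition friend_sub (K : {subfield L}) (U : {vspace L}) : bool :=
  (K * U <= U)%VS.

Definition friend_flag (K : {subfield L}) (Fl : flag) : bool :=
  all (friend_sub K) Fl.

Definition best_friend (K : {subfield L}) (Fl : flag) : Prop :=
  friend_flag K Fl /\
  forall K' : {subfield L}, friend_flag K' Fl -> (\dim K' <= \dim K)%N.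

Definition theflag (K : {subfield L}) (a : L) (l : nat) (s : seq nat) : flag :=
  [seq (\sum_(j < si) (K * <[a ^+ (l * j)]>)%VS)%VS | si <- s].

End FlagDefs.

From HB Require Import structures.
From mathcomp Require Import all_boot all_order all_algebra all_field.
From mathcomp Require Import zify.

Set Implicit Arguments.
Unset Strict Implicit.
Unset Printing Implicit Defensive.

Import GRing.Theory.

(* Write b = alpha^l, V_k = (+)_{j<k} K b^j (so that F_i = V_{s_i}) and
   d = [K(b) : K].  For 0 < k < d the elements x with x V_k <= V_k are exactly
   those of K: from V_{k+1} :&: V_{k+1} b = V_k b such an x for V_{k+1} also
   stabilises V_k, and V_1 = K.  Hence V_k alpha^i = V_k alpha^j iff
   alpha^(j-i) is in K, i.e. iff i = j modulo N = (q^n-1)/(q^m-1); this gives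
   the best friend, the size of the orbit and its disjointness.  Two distinct
   K-subspaces of equal dimension are at distance at least 2m, with equality
   for V_k and V_k b when k < d since both lie in V_{k+1}, whereas
   V_d = K(b) is fixed by b: comparing F with F alpha^l yields the minimum
   distances.  Finally c divides N, so the orbit under alpha splits into the
   c orbits under alpha^c of F, F alpha, ..., F alpha^(c-1). *)

Lemma predn_exp_dvd x a b : a %| b -> (x ^ a).-1 %| (x ^ b).-1.
Proof. by move=> /dvdnP[k ->]; rewrite mulnC expnM dvdn_pred_predX. Qed.

Lemma predn_exp_gt0 x k : 1 < x -> 0 < k -> 0 < (x ^ k).-1.
Proof. by move=> x_gt1 k_gt0; rewrite ltn_predRL -{1}(expn0 x) ltn_exp2l. Qed.

Lemma dvdn_div_div a e M : a %| e -> e %| M -> M %/ e %| M %/ a.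
Proof.
move=> ae eM; rewrite dvdn_divRL ?(dvdn_trans ae) //.
by rewrite -{2}(divnK eM) dvdn_mul.
Qed.

Lemma sorted_ltn_mem s k : sorted ltn s -> k \in s -> head 0 s <= k <= last 0 s.
Proof.
move=> s_sorted /(nthP 0)[i i_lt <-].
have le_nth := sorted_leq_nth leq_trans leqnn 0 (sub_sorted ltnW s_sorted).
have s_gt0 : 0 < size s by apply: leq_ltn_trans i_lt.
by rewrite -nth0 -nth_last !le_nth ?inE ?prednK // -ltnS prednK.
Qed.

Lemma sorted_ltn_head_last s : sorted ltn s -> 1 < size s -> head 0 s < last 0 s.
Proof.
case: s => [//|x [//|y t]] xyt _ /=.
by have /allP := order_path_min ltn_trans xyt; apply; apply: mem_last.
Qed.

Lemma count_ltn_last s : sorted ltn s -> count (fun k => k < last 0 s) s = (size s).-1.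
Proof.
case/lastP: s => [//|t z] tz_sorted.
rewrite last_rcons size_rcons -cats1 count_cat /= ltnn !addn0.
have /andP[zt _] : (z \notin t) && uniq t.
  by rewrite -rcons_uniq (sorted_uniq ltn_trans ltnn).
apply/eqP; rewrite -all_count; apply/allP => k kt.
have /andP[_] : head 0 (rcons t z) <= k <= last 0 (rcons t z).
  by apply: sorted_ltn_mem; rewrite // mem_rcons inE kt orbT.
by rewrite last_rcons ltn_neqAle => ->; case: eqP kt zt => // ->->.
Qed.

Section Codes.
Variable T : eqType.

Lemma leq_foldr_minn k a t : all (leq k) (a :: t) -> k <= foldr minn a t.
Proof.
elim: t => [/andP[]//|y t IH] /=; rewrite leq_min => /and3P[ka ky kt].
by rewrite ky IH //= ka.
Qed.

Lemma foldr_minn_leq a t x : x \in a :: t -> foldr minn a t <= x.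
Proof.
elim: t => [|y t IH]; first by rewrite inE => /eqP->.
rewrite /= !inE geq_min => /or3P[xa|/eqP->|xt]; last 2 first.
- by rewrite leqnn.
- by rewrite IH ?inE ?xt ?orbT.
by rewrite IH ?orbT // inE xa.
Qed.

Lemma min_dist_eq (d : T -> T -> nat) (C : seq T) k :
  {in C &, forall x y, x != y -> k <= d x y} ->
  (exists x y, [/\ x \in C, y \in C, x != y & d x y = k]) ->
  min_dist d C = k.
Proof.
move=> d_ge [x [y [xC yC xy dxy]]]; rewrite /min_dist.
set ds := [seq _ | _ <- _ & _].
have ds_ge z : z \in ds -> k <= z.
  case/mapP=> -[x' y']; rewrite mem_filter /=.
  case/andP=> xy' /allpairsP[[a b] /= [aC bC [ea eb]]] ->.
  by subst x' y'; apply: d_ge.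
have k_ds : k \in ds.
  by apply/mapP; exists (x, y); rewrite // mem_filter xy; apply/allpairsP; exists (x, y).
case: ds ds_ge k_ds => [//|a t] ds_ge k_ds.
by apply/eqP; rewrite eqn_leq foldr_minn_leq // leq_foldr_minn //; apply/allP.
Qed.

Lemma perm_undup_iota_mod (H : nat -> T) N M : 0 < N <= M ->
  (forall i j, (H i == H j) = (i == j %[mod N])) ->
  perm_eq (undup [seq H j | j <- iota 0 M]) [seq H j | j <- iota 0 N].
Proof.
move=> /andP[index_gt0 NM] HE; apply: uniq_perm; rewrite ?undup_uniq //.
  rewrite map_inj_in_uniq ?iota_uniq // => i j; rewrite !mem_iota /= => iN jN /eqP.
  by rewrite HE !modn_small // => /eqP.
move=> X; rewrite mem_undup; apply/mapP/mapP => -[j jM ->].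
  exists (j %% N); first by rewrite mem_iota ltn_mod index_gt0.
  by apply/eqP; rewrite HE modn_mod.
by exists j; rewrite // mem_iota /= (leq_trans _ NM) //; rewrite mem_iota in jM.
Qed.

Lemma uniq_flatten_map (I : eqType) (f : I -> seq T) (xs : seq I) :
  uniq xs -> {in xs, forall x, uniq (f x)} ->
  {in xs &, forall x y z, z \in f x -> z \in f y -> x = y} ->
  uniq (flatten (map f xs)).
Proof.
elim: xs => [//|x xs IH] /= /andP[xxs xs_uniq] f_uniq f_disj.
rewrite cat_uniq f_uniq ?mem_head //= IH //; first last.
- by move=> y z yxs zxs; apply: f_disj; rewrite inE ?yxs ?zxs orbT.
- by move=> y yxs; apply: f_uniq; rewrite inE yxs orbT.
rewrite andbT; apply/hasPn => z /flatten_mapP[y yxs zy]; apply/negP => zx.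
have xy : x = y by apply: (f_disj x y _ _ z); rewrite ?inE ?eqxx ?yxs ?orbT.
by rewrite xy yxs in xxs.
Qed.

End Codes.

Local Open Scope ring_scope.

Section KModules.
Variables (F : finFieldType) (L : fieldExtType F) (K : {subfield L}).
Implicit Types (U V : {vspace L}) (x : L).

Lemma flag_dist_map (I : Type) (f g : I -> {vspace L}) (s : seq I) :
  flag_dist [seq f k | k <- s] [seq g k | k <- s] =
    (\sum_(k <- s) subspace_dist (f k) (g k))%N.
Proof.
case: s => [|k0 s]; first by rewrite /flag_dist big_ord0 big_nil.
rewrite /flag_dist size_map (big_nth k0) big_mkord.
by apply: eq_bigr => i _; rewrite !(nth_map k0).
Qed.

Lemma subspace_dist_eqdim U V : \dim U = \dim V ->
  subspace_dist U V = (2 * (\dim (U + V) - \dim U))%N.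
Proof.
move=> dimUV; rewrite /subspace_dist.
have := dimv_sum_cap U V; have := dimvS (capvSl U V); lia.
Qed.

Lemma kmodule_coset U x : (K * U <= U)%VS -> (K * (U * <[x]>) <= U * <[x]>)%VS.
Proof. by move=> KU; rewrite prodvA prodvSl. Qed.

Lemma kmodule_coset_memK U x : (K * U <= U)%VS -> x \in K -> x != 0 ->
  (U * <[x]>)%VS = U.
Proof.
move=> KU xK x_neq0; apply/eqP; rewrite eqEdim dim_cosetv // leqnn andbT.
by apply: subv_trans KU; rewrite prodvC prodvSl // -memvE.
Qed.

Lemma kmodule_dim_addv U V : (K * U <= U)%VS -> (K * V <= V)%VS -> ~~ (V <= U)%VS ->
  (\dim U + \dim K <= \dim (U + V))%N.
Proof.
move=> KU KV VU; have KUV : (K * (U + V) <= U + V)%VS by rewrite prodvDr addvS.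
have ltUV : (\dim U < \dim (U + V))%N.
  rewrite ltn_neqAle dimvS ?addvSl // andbT; apply: contra VU => /eqP dimUV.
  suff <- : (U + V)%VS = U by rewrite addvSr.
  by symmetry; apply/eqP; rewrite eqEdim addvSl dimUV leqnn.
have /dvdnP[a dimU] := field_module_dimS KU.
have /dvdnP[c dimUplusV] := field_module_dimS KUV.
rewrite dimU dimUplusV ltn_pmul2r ?adim_gt0 // in ltUV.
by rewrite dimU dimUplusV addnC -mulSn leq_pmul2r ?adim_gt0.
Qed.

Lemma kmodule_dist_ge U V : (K * U <= U)%VS -> (K * V <= V)%VS ->
  \dim U = \dim V -> U != V -> (2 * \dim K <= subspace_dist U V)%N.
Proof.
move=> KU KV dimUV UV; have VU : ~~ (V <= U)%VS.
  by apply: contra UV => VU; rewrite eq_sym eqEdim VU dimUV leqnn.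
rewrite subspace_dist_eqdim //; have := kmodule_dim_addv KU KV VU; lia.
Qed.

Lemma kmodule_dist_eq U V : (K * U <= U)%VS -> (K * V <= V)%VS ->
  \dim U = \dim V -> U != V -> (\dim (U + V) <= \dim U + \dim K)%N ->
  subspace_dist U V = (2 * \dim K)%N.
Proof.
move=> KU KV dimUV UV dim_le; have := kmodule_dist_ge KU KV dimUV UV.
rewrite subspace_dist_eqdim //; lia.
Qed.

End KModules.

Section PowerSpans.
Variables (F : finFieldType) (L : fieldExtType F) (K : {subfield L}) (b : L).

Definition powspace k : {vspace L} := (\sum_(j < k) K * <[b ^+ j]>)%VS.

Local Notation V := powspace.
Local Notation d := (adjoin_degree K b).

Lemma powspaceS k : V k.+1 = (V k + K * <[b ^+ k]>)%VS.
Proof. by rewrite /powspace big_ord_recr. Qed.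

Lemma powspace1 : V 1 = K.
Proof. by rewrite powspaceS /powspace big_ord0 add0v expr0 prodv1. Qed.

Lemma subv_powspaceS k : (V k <= V k.+1)%VS.
Proof. by rewrite powspaceS addvSl. Qed.

Lemma powspace_module k : (K * V k <= V k)%VS.
Proof.
rewrite /powspace big_distrr /=; apply/subv_sumP => j _.
by rewrite prodvA prodv_id (sumv_sup j).
Qed.

Lemma powspace_mulr k : (V k * <[b]> <= V k.+1)%VS.
Proof.
rewrite /powspace big_distrl /= big_ord_recl /=; apply/subv_sumP => j _.
rewrite -prodvA prodv_line -exprSr; apply: subv_trans (addvSr _ _).
exact: (sumv_sup j).
Qed.

Lemma powspace_adjoin : V d = <<K; b>>%VS.
Proof. by rewrite Fadjoin_eq_sum. Qed.

Lemma dim_powspace_leq k k' : (k <= k')%N ->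
  (\dim (V k') <= \dim (V k) + (k' - k) * \dim K)%N.
Proof.
move=> /subnK <-; rewrite addnK; elim: (k' - k)%N => [|i IH].
  by rewrite add0n mul0n addn0.
have dim_line : (\dim (K * <[b ^+ (i + k)]>) <= \dim K)%N.
  apply: leq_trans (dim_prodv _ _) _; rewrite dim_vline.
  by case: (_ != 0); rewrite ?muln1 ?muln0.
rewrite addSn powspaceS; apply: leq_trans (dimv_add_leqif _ _).1 _.
by rewrite mulSn addnCA addnC leq_add.
Qed.

Lemma dim_powspace k : (k <= d)%N -> \dim (V k) = (k * \dim K)%N.
Proof.
move=> kd; have := dim_powspace_leq kd; have := dim_powspace_leq (leq0n k).
have -> : V 0 = 0%VS by rewrite /powspace big_ord0.
rewrite powspace_adjoin dim_Fadjoin dimv0 !subn0 mulnBl.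
have := leq_mul kd (leqnn (\dim K)).
move: (k * \dim K)%N (d * \dim K)%N (\dim (V k)) => x y z; lia.
Qed.

Lemma powspace_capv_mulr k : (k.+2 <= d)%N ->
  (V k.+1 :&: V k.+1 * <[b]>)%VS = (V k * <[b]>)%VS.
Proof.
move=> kd; have b_neq0 : b != 0 by apply: contraTneq kd => ->; rewrite adjoin0_deg.
have sum_sup : (V k.+2 <= V k.+1 + V k.+1 * <[b]>)%VS.
  rewrite [V k.+2]powspaceS; apply: addvS => //.
  by rewrite exprSr -prodv_line prodvA prodvSl // powspaceS addvSr.
apply/esym/eqP; rewrite eqEdim subv_cap powspace_mulr prodvSl ?subv_powspaceS //=.
have := dimv_sum_cap (V k.+1) (V k.+1 * <[b]>); have := dimvS sum_sup.
rewrite !dim_cosetv // !dim_powspace ?(ltnW kd) ?(ltnW (ltnW kd)) // !mulSn; lia.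
Qed.

Lemma powspace_stab k x : (0 < k < d)%N ->
  (forall u, u \in V k -> x * u \in V k) -> x \in K.
Proof.
elim: k => [//|k IH] /andP[_ kd] xV.
case: k IH kd xV => [_ _ xV|k IH kd xV].
  by rewrite -powspace1 -[x]mulr1 xV // powspace1 mem1v.
apply: IH => [|u uV]; first by rewrite /= ltnW.
have b_neq0 : b != 0 by apply: contraTneq kd => ->; rewrite adjoin0_deg.
have ub : u * b \in V k.+2 by rewrite (subvP (powspace_mulr _)) ?memv_mul ?memv_line.
have xu : x * u \in V k.+2 by rewrite xV // (subvP (subv_powspaceS _)).
have : x * u * b \in (V k.+2 :&: V k.+2 * <[b]>)%VS.
  by rewrite memv_cap -{1}mulrA xV // memv_mul ?memv_line.
by rewrite powspace_capv_mulr // => /memv_cosetP[w wV /(mulIf b_neq0)->].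
Qed.

Lemma powspace_coset_eq k x z : (0 < k < d)%N -> x != 0 -> z != 0 ->
  (V k * <[x]> == V k * <[x * z]>)%VS = (z \in K).
Proof.
move=> kd x_neq0 z_neq0; apply/eqP/idP => [Vx_eq|zK]; last first.
  by rewrite mulrC -prodv_line prodvA (kmodule_coset_memK (powspace_module k) zK).
apply: (powspace_stab kd) => u uV.
have : u * (x * z) \in (V k * <[x]>)%VS by rewrite Vx_eq memv_mul ?memv_line.
rewrite [x * z]mulrC mulrA [u * z]mulrC.
by case/memv_cosetP => w wV /(mulIf x_neq0)->.
Qed.

Lemma powspace_dist_mulr k : b != 0 -> (0 < k <= d)%N ->
  subspace_dist (V k) (V k * <[b]>) = if (k < d)%N then (2 * \dim K)%N else 0%N.
Proof.
move=> b_neq0 /andP[k_gt0 kd]; case: ltnP => [k_lt_d|d_le_k]; last first.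
  have -> : k = d by apply/eqP; rewrite eqn_leq kd.
  have -> : (V d * <[b]>)%VS = V d.
    apply/eqP; rewrite eqEdim dim_cosetv // leqnn andbT powspace_adjoin.
    by apply: prodv_sub => //; rewrite -memvE memv_adjoin.
  by rewrite /subspace_dist addvv capvv subnn.
have VbV : V k != (V k * <[b]>)%VS.
  have k_bounds : (0 < k < d)%N by rewrite k_gt0.
  rewrite -[X in X != _]prodv1 -[b]mul1r powspace_coset_eq ?oner_neq0 //.
  by rewrite -adjoin_deg_eq1 gtn_eqF // (leq_ltn_trans k_gt0 k_lt_d).
apply: kmodule_dist_eq; rewrite ?kmodule_coset ?powspace_module ?dim_cosetv //.
have /dimvS : (V k + V k * <[b]> <= V k.+1)%VS.
  by rewrite subv_add subv_powspaceS powspace_mulr.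
by rewrite !dim_powspace ?(ltnW k_lt_d) // mulSn addnC.
Qed.

End PowerSpans.

Lemma flag_mulM (F : finFieldType) (L : fieldExtType F) (Fl : flag L) x y :
  flag_mul (flag_mul Fl x) y = flag_mul Fl (x * y).
Proof. by rewrite /flag_mul -map_comp; apply: eq_map => U /=; rewrite -prodvA prodv_line. Qed.

Section PrimitiveOrbit.
Variables (F : finFieldType) (L : fieldExtType F) (K : {subfield L}) (alpha : L).

(* [M] is the order of [alpha] and [N] the index of the unit group of [K]. *)
Local Notation M := (#|F| ^ \dim {: L}).-1%N.
Local Notation N := (M %/ (#|F| ^ \dim K).-1)%N.

Hypothesis alpha_prim : M.-primitive_root alpha.

Lemma order_gt0 : (0 < M)%N.
Proof. exact: prim_order_gt0 alpha_prim. Qed.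

Lemma order_eq_index_mul : M = (N * (#|F| ^ \dim K).-1)%N.
Proof. by rewrite divnK // predn_exp_dvd // field_dimS // subvf. Qed.

Lemma index_gt0 : (0 < N)%N.
Proof. by move: order_gt0; rewrite {1}order_eq_index_mul muln_gt0 => /andP[]. Qed.

Lemma index_leq_order : (N <= M)%N.
Proof.
by rewrite {2}order_eq_index_mul leq_pmulr // predn_exp_gt0 ?finNzRing_gt1 ?adim_gt0.
Qed.

Lemma prim_neq0 : alpha != 0.
Proof.
apply/eqP => alpha0; have := prim_expr_order alpha_prim.
by rewrite alpha0 expr0n gtn_eqF ?order_gt0 // => /eqP; rewrite eq_sym oner_eq0.
Qed.

Lemma prim_expr_in_subfield j : (alpha ^+ j \in K) = (N %| j)%N.
Proof.
rewrite Fermat's_little_theorem -exprM (eq_prim_root_expr alpha_prim).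
have q_gt1 : (1 < #|F|)%N := finNzRing_gt1 F.
rewrite eqn_mod_dvd; last by rewrite leq_pmulr // expn_gt0 ltnW.
rewrite -[X in (_ - X)%N]muln1 -mulnBr subn1 {1}order_eq_index_mul dvdn_pmul2r //.
by rewrite predn_exp_gt0 // adim_gt0.
Qed.

Lemma kmodule_coset_prim_mod U i j : (K * U <= U)%VS -> i = j %[mod N] ->
  (U * <[alpha ^+ i]>)%VS = (U * <[alpha ^+ j]>)%VS.
Proof.
move=> KU; wlog ij : i j / (i <= j)%N => [hwlog|].
  by case: (leqP i j) => [/hwlog//|/ltnW ji /esym/(hwlog _ _ ji)->].
move=> /eqP; rewrite eq_sym eqn_mod_dvd // -prim_expr_in_subfield => memK.
rewrite -(subnKC ij) exprD mulrC -prodv_line prodvA (kmodule_coset_memK KU memK) //.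
by rewrite expf_neq0 // prim_neq0.
Qed.

Lemma powspace_coset_prim_eq b k i j : (0 < k < adjoin_degree K b)%N ->
  (powspace K b k * <[alpha ^+ i]> == powspace K b k * <[alpha ^+ j]>)%VS =
    (i == j %[mod N]).
Proof.
move=> kd; wlog ij : i j / (i <= j)%N => [hwlog|].
  by case: (leqP i j) => [/hwlog//|/ltnW /hwlog]; rewrite eq_sym => ->; rewrite eq_sym.
rewrite -(subnKC ij) exprD powspace_coset_eq ?expf_neq0 ?prim_neq0 //.
by rewrite prim_expr_in_subfield eq_sym eqn_mod_dvd ?leq_addr // addKn.
Qed.

Lemma powspace_coset_prim_dist b k i j : (0 < k < adjoin_degree K b)%N ->
  ~~ (i == j %[mod N]) ->
  (2 * \dim K <= subspace_dist (powspace K b k * <[alpha ^+ i]>)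
                               (powspace K b k * <[alpha ^+ j]>))%N.
Proof.
move=> kd ij; apply: kmodule_dist_ge; rewrite ?kmodule_coset ?powspace_module //.
  by rewrite !dim_cosetv ?expf_neq0 ?prim_neq0.
by rewrite powspace_coset_prim_eq.
Qed.

Lemma mem_Orb (b : L) (Fl : flag L) X :
  reflect (exists2 j, (j < M)%N & X = flag_mul Fl (b ^+ j)) (X \in Orb b Fl).
Proof.
rewrite /Orb mem_undup; apply: (iffP mapP) => -[j jM ->]; exists j => //;
  by move: jM; rewrite mem_iota.
Qed.

Lemma Orb_flatten (Fl : flag L) c : (0 < c)%N ->
  Orb alpha Fl =i flatten [seq Orb (alpha ^+ c) (flag_mul Fl (alpha ^+ i)) | i <- iota 0 c].
Proof.
move=> c_gt0 X; apply/mem_Orb/flatten_mapP => [[j jM ->]|[i _ /mem_Orb[j jM ->]]].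
  exists (j %% c)%N; first by rewrite mem_iota ltn_mod c_gt0.
  apply/mem_Orb; exists (j %/ c)%N; first exact: leq_ltn_trans (leq_div j c) jM.
  by rewrite flag_mulM -exprM -exprD addnC mulnC -divn_eq.
exists ((i + c * j) %% M)%N; first by rewrite ltn_mod order_gt0.
by rewrite (prim_expr_mod alpha_prim) flag_mulM -exprM exprD.
Qed.

Section PeriodicFlag.
Variable Fl : flag L.
Hypothesis Fl_period : forall i j,
  (flag_mul Fl (alpha ^+ i) == flag_mul Fl (alpha ^+ j)) = (i == j %[mod N]).

Lemma perm_Orb : perm_eq (Orb alpha Fl) [seq flag_mul Fl (alpha ^+ j) | j <- iota 0 N].
Proof. by apply: perm_undup_iota_mod; rewrite ?index_gt0 ?index_leq_order. Qed.

Lemma size_Orb : size (Orb alpha Fl) = N.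
Proof. by rewrite (perm_size perm_Orb) size_map size_iota. Qed.

Lemma uniq_Orb_flatten c : (c %| N)%N ->
  uniq (flatten [seq Orb (alpha ^+ c) (flag_mul Fl (alpha ^+ i)) | i <- iota 0 c]).
Proof.
move=> cN; apply: uniq_flatten_map => [|i _|i i']; rewrite ?iota_uniq ?undup_uniq //.
rewrite !mem_iota /= => ic i'c X /mem_Orb[j _ ->] /mem_Orb[j' _].
rewrite !flag_mulM -!exprM -!exprD => /eqP; rewrite Fl_period => /eqP/(congr1 (modn^~ c)).
by rewrite !modn_dvdm // ![(_ + c * _)%N]addnC !(mulnC c) !modnMDl !modn_small.
Qed.

End PeriodicFlag.

Lemma dvdn_adjoin_index x :
  (M %/ (#|F| ^ (\dim K * adjoin_degree K x)).-1 %| N)%N.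
Proof.
apply: dvdn_div_div; first by apply: predn_exp_dvd; apply: dvdn_mulr.
by apply: predn_exp_dvd; rewrite mulnC -dim_Fadjoin field_dimS ?subvf.
Qed.

Section TheFlag.
Variables (l : nat) (s : seq nat).

Local Notation b := (alpha ^+ l).
Local Notation d := (adjoin_degree K b).
Local Notation V := (powspace K b).
Local Notation Fl := (theflag K alpha l s).

Lemma theflagE : Fl = [seq V k | k <- s].
Proof.
apply: eq_map => k; rewrite /powspace.
by apply: eq_bigr => j _; rewrite exprM.
Qed.

Lemma theflag_mul x : flag_mul Fl x = [seq V k * <[x]> | k <- s]%VS.
Proof. by rewrite theflagE /flag_mul -map_comp. Qed.

Lemma theflag_dist i j :
  flag_dist (flag_mul Fl (alpha ^+ i)) (flag_mul Fl (alpha ^+ j)) =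
    (\sum_(k <- s) subspace_dist (V k * <[alpha ^+ i]>) (V k * <[alpha ^+ j]>))%N.
Proof. by rewrite !theflag_mul flag_dist_map. Qed.

Lemma proj_code_Orb_theflag t : (t < size s)%N ->
  proj_code (Orb alpha Fl) t =i [seq V (nth 0%N s t) * <[alpha ^+ j]> | j <- iota 0 M]%VS.
Proof.
move=> ts Y; rewrite /proj_code mem_undup.
apply/mapP/mapP => [[X /mem_Orb[j jM ->] ->]|[j jM ->]].
  by exists j; rewrite ?mem_iota // theflag_mul (nth_map 0%N).
exists (flag_mul Fl (alpha ^+ j)); last by rewrite theflag_mul (nth_map 0%N).
by apply/mem_Orb; exists j => //; move: jM; rewrite mem_iota.
Qed.

Hypothesis s_bounds : {in s, forall k, (0 < k <= d)%N}.
Hypothesis head_bounds : (0 < head 0%N s < d)%N.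

Lemma exponent_neq0_mod_index : ~~ (0 == l %[mod N]).
Proof.
rewrite eq_sym eqn_mod_dvd // subn0 -prim_expr_in_subfield -adjoin_deg_eq1.
by case/andP: head_bounds => h_gt0 h_lt; rewrite gtn_eqF // (leq_ltn_trans h_gt0).
Qed.

Lemma theflag_best_friend : best_friend K Fl.
Proof.
split=> [|K' /allP K'Fl].
  by apply/allP => U; rewrite theflagE => /mapP[k _ ->]; exact: powspace_module.
have /prodvP K'V : friend_sub K' (V (head 0%N s)).
  apply: K'Fl; rewrite theflagE map_f //.
  by case: (s) head_bounds => //= k t _; rewrite mem_head.
apply/dimvS/subvP => x xK'; apply: (powspace_stab head_bounds) => u uV.
exact: K'V.
Qed.

Lemma theflag_period i j :
  (flag_mul Fl (alpha ^+ i) == flag_mul Fl (alpha ^+ j)) = (i == j %[mod N]).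
Proof.
apply/idP/idP => [|/eqP ij]; last first.
  rewrite !theflag_mul; apply/eqP/eq_map => k.
  exact: kmodule_coset_prim_mod (powspace_module _ _ _) ij.
rewrite !theflag_mul; case: (s) head_bounds => [//|k t] /= kd /eqP[/eqP].
by rewrite powspace_coset_prim_eq.
Qed.

Lemma min_dist_Orb_theflag :
  min_dist (@flag_dist F L) (Orb alpha Fl) = (2 * \dim K * count (fun k => k < d) s)%N.
Proof.
have -> : (2 * \dim K * count (fun k => k < d) s =
    \sum_(k <- s) if k < d then 2 * \dim K else 0)%N.
  by rewrite -sum1_count big_distrr big_mkcond /=; under eq_bigr do rewrite muln1.
apply: min_dist_eq => [X Y /mem_Orb[i _ ->] /mem_Orb[j _ ->]|].
  rewrite theflag_period theflag_dist => ij.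
  rewrite big_seq [X in (_ <= X)%N]big_seq; apply: leq_sum => k ks.
  case: ifP => // kd; apply: powspace_coset_prim_dist ij.
  by case/andP: (s_bounds ks) => ->.
exists (flag_mul Fl (alpha ^+ 0)), (flag_mul Fl (alpha ^+ (l %% M))).
rewrite (prim_expr_mod alpha_prim) theflag_period theflag_dist exponent_neq0_mod_index.
split=> //; first by apply/mem_Orb; exists 0%N; rewrite ?order_gt0.
  by apply/mem_Orb; exists (l %% M)%N; rewrite ?ltn_mod ?order_gt0 ?(prim_expr_mod alpha_prim).
rewrite big_seq [RHS]big_seq; apply: eq_bigr => k ks.
by rewrite expr0 prodv1 powspace_dist_mulr ?expf_neq0 ?prim_neq0 ?s_bounds.
Qed.

Section ProperComponent.
Variable t : nat.
Hypotheses (ts : (t < size s)%N) (st_lt : (nth 0%N s t < d)%N).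

Let st_le : (0 < nth 0%N s t <= d)%N := s_bounds (mem_nth 0%N ts).
Let st_bounds : (0 < nth 0%N s t < d)%N.
Proof. by case/andP: st_le => ->. Qed.

Lemma size_proj_code_Orb_theflag : size (proj_code (Orb alpha Fl) t) = N.
Proof.
have perm_proj : perm_eq (proj_code (Orb alpha Fl) t)
    (undup [seq V (nth 0%N s t) * <[alpha ^+ j]> | j <- iota 0 M]%VS).
  apply: uniq_perm; [exact: undup_uniq | exact: undup_uniq | move=> Y].
  by rewrite proj_code_Orb_theflag // mem_undup.
rewrite (perm_size perm_proj) (perm_size (perm_undup_iota_mod (N := N) _ _)).
- by rewrite size_map size_iota.
- by rewrite index_gt0 index_leq_order.
by move=> i j; apply: powspace_coset_prim_eq.
Qed.

Lemma min_dist_proj_code_Orb_theflag :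
  min_dist (@subspace_dist F L) (proj_code (Orb alpha Fl) t) = (2 * \dim K)%N.
Proof.
apply: min_dist_eq => [X Y|].
  rewrite !proj_code_Orb_theflag // => /mapP[i _ ->] /mapP[j _ ->].
  by rewrite powspace_coset_prim_eq // => ij; apply: powspace_coset_prim_dist.
exists (V (nth 0%N s t) * <[alpha ^+ 0]>)%VS, (V (nth 0%N s t) * <[alpha ^+ (l %% M)]>)%VS.
rewrite !proj_code_Orb_theflag // (prim_expr_mod alpha_prim).
rewrite powspace_coset_prim_eq // exponent_neq0_mod_index; split=> //.
- by apply/mapP; exists 0%N; rewrite ?mem_iota ?order_gt0.
- apply/mapP; exists (l %% M)%N; first by rewrite mem_iota ltn_mod order_gt0.
  by rewrite (prim_expr_mod alpha_prim).
by rewrite expr0 prodv1 powspace_dist_mulr ?expf_neq0 ?prim_neq0 ?st_le ?st_lt.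
Qed.

End ProperComponent.

Lemma theflag_consistent : all (fun k => k < d)%N s ->
  flag_code_consistent (Orb alpha Fl) (size s).
Proof.
move=> /allP s_lt; split=> [t ts|].
  rewrite undup_id; last exact: undup_uniq.
  by rewrite size_Orb ?size_proj_code_Orb_theflag ?s_lt ?mem_nth //; apply: theflag_period.
rewrite min_dist_Orb_theflag (eq_in_count (a2 := predT)) ?count_predT; last first.
  by move=> k /s_lt.
rewrite (eq_bigr (fun=> 2 * \dim K)%N) => [|t _].
  by rewrite sum_nat_const card_ord mulnC.
by rewrite min_dist_proj_code_Orb_theflag ?s_lt ?mem_nth.
Qed.

End TheFlag.

End PrimitiveOrbit.

Theorem mainTheorem5 (F : finFieldType) (L : fieldExtType F)
  (q n m : nat) (hq : #|F| = q) (hn : \dim {: L} = n)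
  (K : {subfield L}) (hK : \dim K = m) (hmn : (m %| n)%N)
  (alpha : L) (halpha : (q ^ n).-1.-primitive_root alpha)
  (l : nat) (hl1 : (1 <= l)%N) (hl2 : (l < (q ^ n).-1 %/ (q ^ m).-1)%N)
  (Ldeg : nat) (hLdeg : Ldeg = (size (minPoly K (alpha ^+ l))).-1)
  (r : nat) (hr : (2 <= r)%N)
  (s : seq nat) (hs_size : size s = r) (hs_sorted : sorted ltn s)
  (hs1 : (1 <= head 0%N s)%N) (hsL : (last 0%N s <= Ldeg)%N)
  (hss : (last 0%N s < n %/ m)%N) :
  let Fl := theflag K alpha l s in
  best_friend K Fl /\
  size (Orb alpha Fl) = ((q ^ n).-1 %/ (q ^ m).-1)%N /\
  ((last 0%N s < Ldeg)%N ->
     flag_code_consistent (Orb alpha Fl) r /\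
     min_dist (@flag_dist F L) (Orb alpha Fl) = (2 * m * r)%N) /\
  (last 0%N s = Ldeg ->
     let c := ((q ^ n).-1 %/ (q ^ (m * Ldeg)).-1)%N in
     min_dist (@flag_dist F L) (Orb alpha Fl) = (2 * m * (r - 1))%N /\
     uniq (flatten [seq Orb (alpha ^+ c) (flag_mul Fl (alpha ^+ i)) | i <- iota 0 c]) /\
     Orb alpha Fl =i
       flatten [seq Orb (alpha ^+ c) (flag_mul Fl (alpha ^+ i)) | i <- iota 0 c]).
Proof.
move=> Fl; subst q n m r Ldeg; rewrite size_minPoly /= in hsL *.
set d := adjoin_degree K (alpha ^+ l) in hsL *.
have head_bounds : (0 < head 0%N s < d)%N.
  by rewrite hs1 (leq_trans (sorted_ltn_head_last hs_sorted hr) hsL).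
have s_bounds : {in s, forall k, (0 < k <= d)%N}.
  move=> k /(sorted_ltn_mem hs_sorted)/andP[hk kl].
  by rewrite (leq_trans hs1 hk) (leq_trans kl hsL).
have period := theflag_period halpha head_bounds.
have min_dist_Fl := min_dist_Orb_theflag halpha s_bounds head_bounds.
split; first exact: (theflag_best_friend head_bounds).
split; first exact: (size_Orb halpha period).
split=> [last_lt|last_eq].
  have s_lt : all (fun k => k < d)%N s.
    by apply/allP => k /(sorted_ltn_mem hs_sorted)/andP[_ /leq_ltn_trans->].
  split; first exact: (theflag_consistent halpha s_bounds head_bounds s_lt).
  by rewrite min_dist_Fl; move: s_lt; rewrite all_count => /eqP->.
have cN := dvdn_adjoin_index K (alpha ^+ l).
split; first by rewrite min_dist_Fl -/d -last_eq count_ltn_last // subn1.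
split; first exact: (uniq_Orb_flatten period cN).
exact: (Orb_flatten halpha _ (dvdn_gt0 (index_gt0 K halpha) cN)).
Qed.
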